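(* Let $m,k$ be positive integers with $\gcd(k,m)=1$ and $m$ odd, and let $\pi(x)=x^{2^k+1}$ on $\mathbb{F}_{2^m}$. Then for all $(a_1,a_2),(b_1,b_2)\in\mathbb{F}_{2^m}\times\mathbb{F}_{2^m}$, the identities \[\pi(x)+\pi(x+a_2)+\pi(x+b_2)+\pi(x+a_2+b_2)=0,\qquad {\rm Tr}_1^m\bigl(a_1\pi(x+a_2)+b_1\pi(x+b_2)+(a_1+b_1)\pi(x+a_2+b_2)\bigr)=0\] hold for all $x\in\mathbb{F}_{2^m}$ if and only if one of the following holds: $(a_1,a_2)=(0,0)$, $(b_1,b_2)=(0,0)$, $(a_1,a_2)=(b_1,b_2)$, or $a_2=b_2=0$.
   Context: ${\rm Tr}_1^m$ denotes the absolute trace from $\mathbb{F}_{2^m}$ to $\mathbb{F}_2$. *)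

From mathcomp Require Import all_boot all_order all_algebra all_field.
Set Implicit Arguments. Unset Strict Implicit. Unset Printing Implicit Defensive.
Import GRing.Theory.
Local Open Scope ring_scope.

Definition absTr (F : finFieldType) (m : nat) (x : F) : F :=
  \sum_(i < m) x ^+ (2 ^ i)%N.

Definition gold (F : finFieldType) (k : nat) (x : F) : F := x ^+ (2 ^ k).+1.

(** The first identity does not depend on [x]: it reads
    [a2^q b2 + a2 b2^q = 0] with [q = 2^k], i.e. [(a2/b2)^q = a2/b2], and since
    [gcd(k, m) = 1] the only elements fixed by [z |-> z^q] are those of [F_2].
    Hence [a2 = 0], [b2 = 0] or [a2 = b2], and in each case the trace condition
    collapses to [Tr(c (pi(x) + pi(x + b))) = 0] for all [x], with [b <> 0].
    Substituting [x = b y] turns it into [Tr(d y^q) + Tr(d y) + Tr(d) = 0] with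
    [d = c b^(q+1)]; moving the Frobenius across the trace form gives
    [d^q = d], so [d] is [0] or [1], and [d = 1] is excluded because
    [Tr(1) = 1] for odd [m]. *)

From mathcomp Require Import all_boot all_order all_algebra all_field.
From mathcomp Require Import ring.
Set Implicit Arguments.
Unset Strict Implicit.
Unset Printing Implicit Defensive.

Import GRing.Theory.
Local Open Scope ring_scope.

Lemma expr_pow_fixed_iter (R : pzSemiRingType) (p k n : nat) (z : R) :
  z ^+ (p ^ k) = z -> z ^+ (p ^ (k * n)) = z.
Proof.
move=> zk; elim: n => [|n IHn]; first by rewrite muln0 expr1.
by rewrite mulnS expnD exprM zk IHn.
Qed.

Lemma expr_pow_fixed_coprime (R : pzSemiRingType) (p m k : nat) (z : R) :
  (0 < m)%N -> coprime k m -> z ^+ (p ^ m) = z -> z ^+ (p ^ k) = z ->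
  z ^+ p = z.
Proof.
move=> m_gt0 co_km zm zk.
have [a _] := Bezoutl k m_gt0; rewrite gcdnC (eqP co_km) => /dvdnP[c def_c].
have zak : z ^+ (p ^ (k * a)) = z by exact: expr_pow_fixed_iter.
rewrite -{2}(expr_pow_fixed_iter c zm) mulnC -def_c expnD expn1 exprM.
by rewrite exprAC mulnC zak.
Qed.

Lemma absTr0 (F : finFieldType) (m : nat) : absTr m (0 : F) = 0.
Proof. by rewrite /absTr big1 // => i _; rewrite expr0n expn_eq0. Qed.

Section FieldOfOrderPow2.

Variables (F : finFieldType) (m : nat).
Hypothesis cardF : #|F| = (2 ^ m)%N.
Hypothesis m_gt0 : (0 < m)%N.

Lemma pchar2F : 2%N \in [pchar F].
Proof. exact: card_finPcharP cardF isT. Qed.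

Lemma natr2F : 2%:R = 0 :> F.
Proof. by have /andP[_ /eqP] := pchar2F. Qed.

Lemma exprD_pow2 (n : nat) (x y : F) :
  (x + y) ^+ (2 ^ n) = x ^+ (2 ^ n) + y ^+ (2 ^ n).
Proof. by apply: exprDn_pchar; rewrite pnatX (pnatE _ (isT : prime 2)) pchar2F. Qed.

Lemma expr_pow2_card (x : F) : x ^+ (2 ^ m) = x.
Proof. by rewrite -cardF expf_card. Qed.

Lemma frobenius_fixed_coprime (k : nat) (z : F) :
  coprime k m -> z ^+ (2 ^ k) = z -> z = 0 \/ z = 1.
Proof.
move=> co_km zk.
have z2 : z ^+ 2 = z.
  exact: expr_pow_fixed_coprime m_gt0 co_km (expr_pow2_card z) zk.
have : z * (z - 1) = 0 by rewrite mulrBr mulr1 -expr2 z2 subrr.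
by move/eqP; rewrite mulf_eq0 subr_eq0 => /orP[] /eqP; [left | right].
Qed.

Lemma absTrD (x y : F) : absTr m (x + y) = absTr m x + absTr m y.
Proof. by rewrite /absTr -big_split; apply: eq_bigr => i _; exact: exprD_pow2. Qed.

Lemma absTr_sqr (x : F) : absTr m (x ^+ 2) = absTr m x.
Proof.
rewrite /absTr -(prednK m_gt0) big_ord_recr big_ord_recl /=.
rewrite -exprM -expnS prednK // expr_pow2_card expr1 addrC; congr (_ + _).
by apply: eq_bigr => i _; rewrite -exprM -expnS.
Qed.

Lemma absTr_pow2 (j : nat) (x : F) : absTr m (x ^+ (2 ^ j)) = absTr m x.
Proof. by elim: j => [|j IHj]; rewrite ?expr1 // expnSr exprM absTr_sqr. Qed.

Lemma expr_pow2_predm_mulK (k : nat) (d : F) :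
  (d ^+ (2 ^ (m.-1 * k))) ^+ (2 ^ k) = d.
Proof.
rewrite -exprM -expnD addnC -mulSn prednK //.
exact: expr_pow_fixed_iter (expr_pow2_card d).
Qed.

Lemma absTr_mul_frobenius (k : nat) (d y : F) :
  absTr m (d * y ^+ (2 ^ k)) = absTr m (d ^+ (2 ^ (m.-1 * k)) * y).
Proof. by rewrite -[RHS](absTr_pow2 k) exprMn expr_pow2_predm_mulK. Qed.

Lemma absTr1 : odd m -> absTr m (1 : F) = 1.
Proof.
move=> odd_m; rewrite /absTr (eq_bigr (fun=> 1)) => [|i _]; last by rewrite expr1n.
by rewrite sumr_const card_ord -(GRing.natr_mod_pchar pchar2F) modn2 odd_m.
Qed.

Lemma absTr_neq0 : exists y : F, absTr m y != 0.
Proof.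
apply/existsP; apply: contraT; rewrite negb_exists => /forallP absTr_eq0.
pose P : {poly F} := \sum_(i < m) 'X^(2 ^ i).
have hornerP y : P.[y] = absTr m y.
  by rewrite horner_sum; apply: eq_bigr => i _; rewrite hornerXn.
have P_neq0 : P != 0.
  apply/eqP => /(congr1 (fun p : {poly F} => p`_1)).
  rewrite coef_sum coef0 (bigD1 (Ordinal m_gt0)) //= coefXn big1 ?addr0.
    by move/eqP; rewrite oner_eq0.
  move=> i /eqP i_neq0; rewrite coefXn eq_sym -[X in _ == X](expn0 2) eqn_exp2l //.
  by case: eqP => // i0; case: i_neq0; apply: val_inj.
have sizeP : (size P <= (2 ^ m.-1).+1)%N.
  apply: leq_trans (size_sum _ _ _) _; rewrite big_tnth.
  apply/bigmax_leqP => i _; rewrite size_polyXn ltnS leq_exp2l //.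
  by rewrite -ltnS prednK.
have rootsP : all (root P) (enum F).
  by apply/allP => y _; rewrite /root hornerP; exact: negbNE (absTr_eq0 y).
have := leq_trans (max_poly_roots P_neq0 rootsP (enum_uniq F)) sizeP.
by rewrite -cardE cardF ltnS leq_exp2l // leqNgt ltn_predL m_gt0.
Qed.

Lemma absTr_nondegenerate (e : F) : (forall y, absTr m (e * y) = 0) -> e = 0.
Proof.
move=> absTr_ey; apply/eqP; apply: contraT => e_neq0.
have [y0] := absTr_neq0.
by rewrite -[y0](mulVKf e_neq0) absTr_ey eqxx.
Qed.

Section Gold.

Variable k : nat.
Hypothesis co_km : coprime k m.

Lemma gold_second_difference (x a b : F) :
  gold k x + gold k (x + a) + gold k (x + b) + gold k (x + a + b)
  = a ^+ (2 ^ k) * b + a * b ^+ (2 ^ k).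
Proof.
(* [ring:] only rewrites with its hypotheses, so [2 = 0] does not cancel a coefficient 4. *)
have natr4F : 4%:R = 0 :> F by rewrite -[4%N]/(2 * 2)%N natrM natr2F mul0r.
by rewrite /gold !exprS !exprD_pow2; ring: natr2F natr4F.
Qed.

Lemma gold_cross_eq0 (a b : F) :
  a ^+ (2 ^ k) * b + a * b ^+ (2 ^ k) = 0 <-> [\/ a = 0, b = 0 | a = b].
Proof.
split=> [ab_eq0 | [] ->]; last 3 first.
- by rewrite expr0n expn_eq0 /= !mul0r add0r.
- by rewrite expr0n expn_eq0 /= !mulr0 addr0.
- by rewrite mulrC -mulr2n mulrn_pchar // pchar2F.
have [-> | a_neq0] := eqVneq a 0; first exact: Or31.
have [-> | b_neq0] := eqVneq b 0; first exact: Or32.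
apply: Or33; have ab_fixed : (a / b) ^+ (2 ^ k) = a / b.
  rewrite exprMn exprVn; apply/eqP; rewrite eqr_div ?expf_neq0 //.
  by rewrite -subr_eq0 (GRing.subr_pchar2 pchar2F) ab_eq0.
have [/eqP | /divr1_eq //] := frobenius_fixed_coprime co_km ab_fixed.
by rewrite mulf_eq0 invr_eq0 (negbTE a_neq0) (negbTE b_neq0).
Qed.

Hypothesis odd_m : odd m.

Lemma absTr_frobenius_affine_eq0 (d : F) :
  (forall y, absTr m (d * (y ^+ (2 ^ k) + y + 1)) = 0) -> d = 0.
Proof.
move=> absTr_eq0.
have absTr_d : absTr m d = 0.
  by have := absTr_eq0 0; rewrite expr0n expn_eq0 /= !add0r mulr1.
have d_fixed : d ^+ (2 ^ (m.-1 * k)) = d.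
  apply/eqP; rewrite -subr_eq0 (GRing.subr_pchar2 pchar2F).
  apply/eqP/absTr_nondegenerate => y.
  have := absTr_eq0 y; rewrite !mulrDr mulr1 !absTrD absTr_d addr0.
  by rewrite absTr_mul_frobenius mulrDl absTrD.
have d_fixed_k : d ^+ (2 ^ k) = d.
  by rewrite -{1}d_fixed expr_pow2_predm_mulK.
have [// | d1] := frobenius_fixed_coprime co_km d_fixed_k.
by move: absTr_d; rewrite d1 absTr1 // => /eqP; rewrite oner_eq0.
Qed.

Lemma absTr_gold_difference_eq0 (c b : F) : b != 0 ->
  (forall x, absTr m (c * (gold k x + gold k (x + b))) = 0) -> c = 0.
Proof.
move=> b_neq0 absTr_eq0.
suff : c * (b * b ^+ (2 ^ k)) = 0.
  by move/eqP; rewrite !mulf_eq0 expf_eq0 (negbTE b_neq0) andbF !orbF => /eqP.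
apply: absTr_frobenius_affine_eq0 => y; rewrite -(absTr_eq0 (b * y)).
by congr absTr; rewrite /gold !exprS exprD_pow2 exprMn; ring: natr2F.
Qed.

End Gold.

End FieldOfOrderPow2.

Theorem lemma3p11 (m k : nat) (F : finFieldType)
  (hm : (0 < m)%N) (hk : (0 < k)%N) (hcop : coprime k m) (hodd : odd m)
  (hcard : #|F| = (2 ^ m)%N)
  (a1 a2 b1 b2 : F) :
  (forall x : F,
      gold k x + gold k (x + a2) + gold k (x + b2) + gold k (x + a2 + b2) = 0
   /\ absTr m (a1 * gold k (x + a2) + b1 * gold k (x + b2)
               + (a1 + b1) * gold k (x + a2 + b2)) = 0)
  <->
  ((a1, a2) = (0, 0) \/ (b1, b2) = (0, 0) \/ (a1, a2) = (b1, b2)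
   \/ (a2 = 0 /\ b2 = 0)).
Proof.
have two0 := natr2F hcard; have pchar2 := pchar2F hcard.
have addrKK (x a : F) : x + a + a = x := addrK_pchar2 pchar2 a x.
have cross := gold_cross_eq0 hcard hm hcop.
have reduce := absTr_gold_difference_eq0 hcard hm hcop hodd.
split=> [| Hsol x].
- have [-> | a2_neq0] := eqVneq a2 0; have [-> | b2_neq0] := eqVneq b2 0 => H.
  + by do 3 right.
  + left; congr pair; apply: reduce b2_neq0 _ => x.
    by have [_ <-] := H x; congr absTr; rewrite !addr0; ring: two0.
  + right; left; congr pair; apply: reduce a2_neq0 _ => x.
    by have [_ <-] := H x; congr absTr; rewrite !addr0; ring: two0.
  have /cross[/eqP | /eqP | a2_eq_b2] : a2 ^+ (2 ^ k) * b2 + a2 * b2 ^+ (2 ^ k) = 0.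
  + by rewrite -(gold_second_difference hcard _ 0); case: (H 0).
  + by rewrite (negbTE a2_neq0).
  + by rewrite (negbTE b2_neq0).
  subst b2; do 2 right; left; congr pair.
  apply/eqP; rewrite -subr_eq0 (GRing.subr_pchar2 pchar2); apply/eqP.
  apply: reduce a2_neq0 _ => x; have [_ <-] := H x; congr absTr.
  by rewrite addrKK; ring: two0.
- rewrite (gold_second_difference hcard); split.
    apply/cross; case: Hsol => [[_ ->] | [[_ ->] | [[_ ->] | [-> _]]]];
      [exact: Or31 | exact: Or32 | exact: Or33 | exact: Or31].
  rewrite -(absTr0 F m); congr absTr.
  case: Hsol => [[-> ->] | [[-> ->] | [[-> ->] | [-> ->]]]];
    by rewrite ?addr0 ?addrKK; ring: two0.
Qed.
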